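(* Let $(A,\leq,\cdot,/)$ be a narhoop. Then for all $x,y,z\in A$: (N1) $(x\sqcap y)\sqcap x = x\sqcap y$; (N2) $x\leq xy/y$; (N3) $(x\sqcap y)z\leq xz$; (N4) $(x\sqcap y)/z\leq x/z$. Conversely, let $(A,\cdot,/)$ be any algebra with two binary operations satisfying the following identities, which are (N1)–(N4) with each inequality $u\le v$ written as the equation $u=v\sqcap u$: (N1) $(x\sqcap y)\sqcap x = x\sqcap y$; (N2) $x=(xy/y)\sqcap x$; (N3) $(x\sqcap y)z = xz\sqcap (x\sqcap y)z$; (N4) $(x\sqcap y)/z = (x/z)\sqcap ((x\sqcap y)/z)$. Define a relation $\leq$ on $A$ by $x\leq y$ iff $x=y\sqcap x$. Then $A$ satisfies the identities $x\sqcap (xy/y)=x$, $(x\sqcap y)/y = x/y$ and $(x\sqcap y)\sqcap y=x\sqcap y$, the relation $\leq$ is a partial order, and $(A,\leq,\cdot,/)$ is a narhoop. In particular, narhoops form a variety defined by the identities (N1)–(N4).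
   Context: For a set $A$ with binary operations $\cdot$ and $/$, write $xy$ for $x\cdot y$; the convention is that $\cdot$ binds more strongly than $/$, and $/$ binds more strongly than $\sqcap$, where $x\sqcap y := (x/y)y$. A right-residuated magma is a structure $(A,\leq,\cdot,/)$ where $(A,\leq)$ is a poset and $xy\leq z \iff x\leq z/y$ for all $x,y,z\in A$. Condition (N) on such a structure: for all $x,y$, $x\leq y \iff x=y\sqcap x$. A narhoop (nonassociative right hoop) is a right-residuated magma such that for all $x,y$: $x\leq y \iff x\sqcap y = x = y\sqcap x$ (equivalently, a right-residuated magma satisfying (N) and the identity $(x\sqcap y)\sqcap x=x\sqcap y$). *)

Definition meet {A : Type} (mul div : A -> A -> A) (x y : A) : A :=
  mul (div x y) y.

Definition is_partial_order {A : Type} (le : A -> A -> Prop) : Prop :=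
  (forall x, le x x) /\
  (forall x y, le x y -> le y x -> x = y) /\
  (forall x y z, le x y -> le y z -> le x z).

Definition right_residuated {A : Type} (le : A -> A -> Prop)
  (mul div : A -> A -> A) : Prop :=
  is_partial_order le /\
  (forall x y z, le (mul x y) z <-> le x (div z y)).

Definition narhoop {A : Type} (le : A -> A -> Prop)
  (mul div : A -> A -> A) : Prop :=
  right_residuated le mul div /\
  (forall x y, le x y <-> (meet mul div x y = x /\ x = meet mul div y x)).


(* In a narhoop, x ⊓ y is the largest element of the form u y below x, so
   x ⊓ y <= x, and (N2)-(N4) are residuation and monotonicity of · and / in
   their left argument.  Conversely, in an algebra satisfying (N1)-(N4) the
   relation x <= y :<-> x = y ⊓ x is antisymmetric by (N1); (N2) and (N4)
   give (x ⊓ y)/y = x/y, which yields (x ⊓ y) ⊓ y = x ⊓ y and hence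
   reflexivity and transitivity, while (N3) and (N4) are exactly left
   monotonicity of · and /, from which residuation follows. *)

Local Notation "x ⊓[ mul , div ] y" := (meet mul div x y) (at level 40).

Section RightResiduatedMagma.

Context {A : Type} {le : A -> A -> Prop} {mul div : A -> A -> A}.
Hypothesis residuated : right_residuated le mul div.

Local Notation "x ⊓ y" := (x ⊓[mul, div] y) (at level 40).

Let le_refl : forall x, le x x := proj1 (proj1 residuated).
Let le_trans : forall x y z, le x y -> le y z -> le x z :=
  proj2 (proj2 (proj1 residuated)).
Let residuation : forall x y z, le (mul x y) z <-> le x (div z y) :=
  proj2 residuated.

Lemma le_meet_l (x y : A) : le (x ⊓ y) x.
Proof. apply residuation, le_refl. Qed.

Lemma le_mul_div (x y : A) : le x (div (mul x y) y).
Proof. apply residuation, le_refl. Qed.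

Lemma le_mul_r {x y : A} (z : A) : le x y -> le (mul x z) (mul y z).
Proof.
  intros Hxy. apply residuation.
  apply le_trans with y; [exact Hxy | apply le_mul_div].
Qed.

Lemma le_div_r {x y : A} (z : A) : le x y -> le (div x z) (div y z).
Proof.
  intros Hxy. apply residuation.
  apply le_trans with x; [apply le_meet_l | exact Hxy].
Qed.

End RightResiduatedMagma.

Lemma narhoop_identities (A : Type) (le : A -> A -> Prop) (mul div : A -> A -> A) :
  narhoop le mul div ->
  let m := meet mul div in
  forall x y z : A,
    m (m x y) x = m x y /\
    le x (div (mul x y) y) /\
    le (mul (m x y) z) (mul x z) /\
    le (div (m x y) z) (div x z).
Proof.
  intros [residuated meet_spec] m x y z.
  split; [| split; [| split]].
  - exact (proj1 (proj1 (meet_spec _ _) (le_meet_l residuated x y))).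
  - exact (le_mul_div residuated x y).
  - exact (le_mul_r residuated z (le_meet_l residuated x y)).
  - exact (le_div_r residuated z (le_meet_l residuated x y)).
Qed.

Definition meet_order {A : Type} (mul div : A -> A -> A) (x y : A) : Prop :=
  x = y ⊓[mul, div] x.

Section NarhoopIdentities.

Context {A : Type} {mul div : A -> A -> A}.

Local Notation "x ⊓ y" := (x ⊓[mul, div] y) (at level 40).
Local Notation le := (meet_order mul div).

Hypothesis N1 : forall x y, (x ⊓ y) ⊓ x = x ⊓ y.
Hypothesis N2 : forall x y, x = div (mul x y) y ⊓ x.
Hypothesis N3 : forall x y z, mul (x ⊓ y) z = mul x z ⊓ mul (x ⊓ y) z.
Hypothesis N4 : forall x y z, div (x ⊓ y) z = div x z ⊓ div (x ⊓ y) z.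

Lemma meet_order_antisym (x y : A) : le x y -> le y x -> x = y.
Proof.
  unfold meet_order. intros Hxy Hyx.
  pose proof (N1 x y) as E. rewrite <- Hyx, <- Hxy in E. exact E.
Qed.

Lemma meet_divK (x y : A) : x ⊓ div (mul x y) y = x.
Proof. pose proof (N1 (div (mul x y) y) x) as E. rewrite <- N2 in E. exact E. Qed.

Lemma div_meet_l (x y : A) : div (x ⊓ y) y = div x y.
Proof. apply meet_order_antisym; [apply N4 | apply (N2 (div x y) y)]. Qed.

Lemma meet_meet_r (x y : A) : (x ⊓ y) ⊓ y = x ⊓ y.
Proof. unfold meet at 1. rewrite div_meet_l. reflexivity. Qed.

Lemma meet_order_refl (x : A) : le x x.
Proof.
  unfold meet_order.
  pose proof (meet_meet_r (div (mul x x) x) x) as E. rewrite <- N2 in E.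
  symmetry. exact E.
Qed.

Lemma meet_order_mul_r {x y : A} (z : A) : le x y -> le (mul x z) (mul y z).
Proof. unfold meet_order. intros Hxy. pose proof (N3 y x z) as E. rewrite <- Hxy in E. exact E. Qed.

Lemma meet_order_div_r {x y : A} (z : A) : le x y -> le (div x z) (div y z).
Proof. unfold meet_order. intros Hxy. pose proof (N4 y x z) as E. rewrite <- Hxy in E. exact E. Qed.

(* From x <= y <= z: (y/x)x <= (z/x)x, i.e. x = y ⊓ x <= z ⊓ x, and the
   latter is absorbed by ⊓ x thanks to meet_meet_r. *)
Lemma meet_order_trans {x y z : A} : le x y -> le y z -> le x z.
Proof.
  intros Hxy Hyz.
  pose proof (meet_order_mul_r x (meet_order_div_r x Hyz)) as E.
  change (le (y ⊓ x) (z ⊓ x)) in E.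
  unfold meet_order in *. rewrite <- Hxy, meet_meet_r in E. exact E.
Qed.

Lemma meet_order_meet_l (x y : A) : le (x ⊓ y) x.
Proof.
  pose proof (meet_order_mul_r x (N4 x y x : le (div (x ⊓ y) x) (div x x))) as E.
  change (le ((x ⊓ y) ⊓ x) (x ⊓ x)) in E.
  rewrite N1, <- (meet_order_refl x) in E. exact E.
Qed.

Lemma meet_order_partial : is_partial_order le.
Proof.
  split; [exact meet_order_refl | split].
  - exact meet_order_antisym.
  - intros x y z; exact meet_order_trans.
Qed.

Lemma meet_order_residuated : right_residuated le mul div.
Proof.
  split; [exact meet_order_partial |].
  intros x y z. split; intros H.
  - apply (meet_order_trans (y := div (mul x y) y)).
    + exact (N2 x y).
    + exact (meet_order_div_r y H).
  - apply (meet_order_trans (y := mul (div z y) y)).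
    + exact (meet_order_mul_r y H).
    + apply meet_order_meet_l.
Qed.

Lemma narhoop_meet_order : narhoop le mul div.
Proof.
  split; [exact meet_order_residuated |].
  intros x y. split; intros H.
  - split; [| exact H].
    pose proof (N1 y x) as E. rewrite <- H in E. exact E.
  - exact (proj2 H).
Qed.

End NarhoopIdentities.

Theorem mainTheorem1 :
  (forall (A : Type) (le : A -> A -> Prop) (mul div : A -> A -> A),
     narhoop le mul div ->
     let m := meet mul div in
     forall x y z : A,
       m (m x y) x = m x y /\
       le x (div (mul x y) y) /\
       le (mul (m x y) z) (mul x z) /\
       le (div (m x y) z) (div x z))
  /\
  (forall (A : Type) (mul div : A -> A -> A),
     let m := meet mul div in
     (forall x y, m (m x y) x = m x y) ->
     (forall x y, x = m (div (mul x y) y) x) ->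
     (forall x y z, mul (m x y) z = m (mul x z) (mul (m x y) z)) ->
     (forall x y z, div (m x y) z = m (div x z) (div (m x y) z)) ->
     let le := fun x y : A => x = m y x in
     (forall x y, m x (div (mul x y) y) = x) /\
     (forall x y, div (m x y) y = div x y) /\
     (forall x y, m (m x y) y = m x y) /\
     is_partial_order le /\
     narhoop le mul div).
Proof.
  split; [exact narhoop_identities |].
  intros A mul div m N1 N2 N3 N4 le.
  split; [| split; [| split; [| split]]].
  - exact (@meet_divK A mul div N1 N2).
  - exact (@div_meet_l A mul div N1 N2 N4).
  - exact (@meet_meet_r A mul div N1 N2 N4).
  - exact (@meet_order_partial A mul div N1 N2 N3 N4).
  - exact (@narhoop_meet_order A mul div N1 N2 N3 N4).
Qed.
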